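(* Let $\mathcal{A}$ be an additive category and $\mathrm{Ex}(\mathcal{A})$ the set of all exact structures on $\mathcal{A}$, partially ordered by inclusion. Then $(\mathrm{Ex}(\mathcal{A}),\subseteq)$ is a lattice, with meet $\mathcal{E}\wedge\mathcal{E}'=\mathcal{E}\cap\mathcal{E}'$ and join $\mathcal{E}\vee\mathcal{E}'=\bigcap\{\mathcal{E}''\in\mathrm{Ex}(\mathcal{A}) : \mathcal{E}\subseteq\mathcal{E}'',\ \mathcal{E}'\subseteq\mathcal{E}''\}$.
   Context: An exact structure (in the sense of Quillen) on an additive category $\mathcal{A}$ is a class $\mathcal{E}$ of kernel–cokernel pairs $(i,d)$, closed under isomorphisms, such that: identities are admissible monics and admissible epics; admissible monics are closed under composition, and so are admissible epics; the pushout of an admissible monic along an arbitrary morphism exists and is an admissible monic; the pullback of an admissible epic along an arbitrary morphism exists and is an admissible epic. Here an admissible monic is a morphism $i$ with $(i,d)\in\mathcal{E}$ for some $d$, and an admissible epic dually. It is known (and may be used) that every additive category admits a unique maximal exact structure $\mathcal{E}_{max}$ (containing all exact structures) and a unique minimal one $\mathcal{E}_{min}$, consisting of the split exact sequences. *)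

Record AddCat := {
  Ob : Type;
  Hom : Ob -> Ob -> Type;
  comp : forall a b c : Ob, Hom b c -> Hom a b -> Hom a c;
  idm : forall a : Ob, Hom a a;
  addm : forall a b : Ob, Hom a b -> Hom a b -> Hom a b;
  zerom : forall a b : Ob, Hom a b;
  negm : forall a b : Ob, Hom a b -> Hom a b;
  comp_assoc : forall a b c d (h : Hom c d) (g : Hom b c) (f : Hom a b),
      comp a c d h (comp a b c g f) = comp a b d (comp b c d h g) f;
  comp_id_l : forall a b (f : Hom a b), comp a b b (idm b) f = f;
  comp_id_r : forall a b (f : Hom a b), comp a a b f (idm a) = f;
  add_assoc : forall a b (f g h : Hom a b), addm a b f (addm a b g h) = addm a b (addm a b f g) h;
  add_comm : forall a b (f g : Hom a b), addm a b f g = addm a b g f;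
  add_zero : forall a b (f : Hom a b), addm a b f (zerom a b) = f;
  add_neg : forall a b (f : Hom a b), addm a b f (negm a b f) = zerom a b;
  comp_add_l : forall a b c (g g' : Hom b c) (f : Hom a b),
      comp a b c (addm b c g g') f = addm a c (comp a b c g f) (comp a b c g' f);
  comp_add_r : forall a b c (g : Hom b c) (f f' : Hom a b),
      comp a b c g (addm a b f f') = addm a c (comp a b c g f) (comp a b c g f');
  zero_obj : exists z : Ob, (forall a (f : Hom z a), f = zerom z a) /\
                            (forall a (f : Hom a z), f = zerom a z);
  biproducts : forall a b : Ob, exists (c : Ob) (p1 : Hom c a) (p2 : Hom c b)
      (i1 : Hom a c) (i2 : Hom b c),
      comp a c a p1 i1 = idm a /\ comp b c b p2 i2 = idm b /\
      comp b c a p1 i2 = zerom b a /\ comp a c b p2 i1 = zerom a b /\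
      addm c c (comp c a c i1 p1) (comp c b c i2 p2) = idm c
}.

Arguments comp {a0} {a b c} _ _.
Arguments idm {a0} a.
Arguments addm {a0} {a b} _ _.
Arguments zerom {a0} a b.
Arguments negm {a0} {a b} _.

Section Exact.
Variable A : AddCat.

Definition is_iso {a b : Ob A} (f : Hom A a b) : Prop :=
  exists g : Hom A b a, comp g f = idm a /\ comp f g = idm b.

Definition is_kernel {a b c : Ob A} (i : Hom A a b) (d : Hom A b c) : Prop :=
  comp d i = zerom a c /\
  forall x (f : Hom A x b), comp d f = zerom x c ->
    exists g : Hom A x a, comp i g = f /\ forall g', comp i g' = f -> g' = g.

Definition is_cokernel {a b c : Ob A} (i : Hom A a b) (d : Hom A b c) : Prop :=
  comp d i = zerom a c /\
  forall x (f : Hom A b x), comp f i = zerom a x ->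
    exists g : Hom A c x, comp g d = f /\ forall g', comp g' d = f -> g' = g.

Definition kc_pair {a b c : Ob A} (i : Hom A a b) (d : Hom A b c) : Prop :=
  is_kernel i d /\ is_cokernel i d.

(* a class of (candidate) short sequences a --i--> b --d--> c *)
Definition seq_class : Type :=
  forall a b c : Ob A, Hom A a b -> Hom A b c -> Prop.

Definition subclass (E E' : seq_class) : Prop :=
  forall a b c (i : Hom A a b) (d : Hom A b c), E a b c i d -> E' a b c i d.

Definition adm_mono (E : seq_class) {a b : Ob A} (i : Hom A a b) : Prop :=
  exists (c : Ob A) (d : Hom A b c), E a b c i d.

Definition adm_epi (E : seq_class) {b c : Ob A} (d : Hom A b c) : Prop :=
  exists (a : Ob A) (i : Hom A a b), E a b c i d.

Definition is_pushout {a b a' b' : Ob A} (i : Hom A a b) (f : Hom A a a')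
    (i' : Hom A a' b') (f' : Hom A b b') : Prop :=
  comp f' i = comp i' f /\
  forall x (u : Hom A b x) (v : Hom A a' x), comp u i = comp v f ->
    exists h : Hom A b' x, (comp h f' = u /\ comp h i' = v) /\
      forall h', comp h' f' = u -> comp h' i' = v -> h' = h.

Definition is_pullback {b c b' c' : Ob A} (d : Hom A b c) (g : Hom A c' c)
    (d' : Hom A b' c') (g' : Hom A b' b) : Prop :=
  comp d g' = comp g d' /\
  forall x (u : Hom A x b) (v : Hom A x c'), comp d u = comp g v ->
    exists h : Hom A x b', (comp g' h = u /\ comp d' h = v) /\
      forall h', comp g' h' = u -> comp d' h' = v -> h' = h.

Definition exact_structure (E : seq_class) : Prop :=
  (forall a b c (i : Hom A a b) (d : Hom A b c), E a b c i d -> kc_pair i d) /\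
  (forall a b c a' b' c' (i : Hom A a b) (d : Hom A b c) (i' : Hom A a' b')
      (d' : Hom A b' c') (u : Hom A a a') (v : Hom A b b') (w : Hom A c c'),
      E a b c i d -> is_iso u -> is_iso v -> is_iso w ->
      comp i' u = comp v i -> comp d' v = comp w d -> E a' b' c' i' d') /\
  (forall a, adm_mono E (idm a)) /\
  (forall a, adm_epi E (idm a)) /\
  (forall a b c (f : Hom A a b) (g : Hom A b c),
      adm_mono E f -> adm_mono E g -> adm_mono E (comp g f)) /\
  (forall a b c (f : Hom A a b) (g : Hom A b c),
      adm_epi E f -> adm_epi E g -> adm_epi E (comp g f)) /\
  (forall a b a' (i : Hom A a b) (f : Hom A a a'), adm_mono E i ->
      exists (b' : Ob A) (i' : Hom A a' b') (f' : Hom A b b'),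
        is_pushout i f i' f' /\ adm_mono E i') /\
  (forall b c c' (d : Hom A b c) (g : Hom A c' c), adm_epi E d ->
      exists (b' : Ob A) (d' : Hom A b' c') (g' : Hom A b' b),
        is_pullback d g d' g' /\ adm_epi E d').

Definition ex_meet (E E' : seq_class) : seq_class :=
  fun a b c i d => E a b c i d /\ E' a b c i d.

Definition ex_join (E E' : seq_class) : seq_class :=
  fun a b c i d => forall E'' : seq_class, exact_structure E'' ->
    subclass E E'' -> subclass E' E'' -> E'' a b c i d.

End Exact.

Arguments exact_structure {A} E.
Arguments subclass {A} E E'.
Arguments ex_meet {A} E E' _ _ _ _ _.
Arguments ex_join {A} E E' _ _ _ _ _.

From Stdlib Require Import FunctionalExtensionality PropExtensionality.

(* Both lattice operations are intersections of nonempty families of exact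
   structures: the meet of the family {E, E'}, the join of the family of exact
   structures containing E and E', which is nonempty because it contains the
   maximal one.  The intersection of such a family is again exact: each defining
   datum (the cokernel of an admissible monic, the kernel of an admissible epic,
   a pushout, a pullback) is unique up to isomorphism, so it may be chosen in one
   member of the family, and closure under isomorphisms carries it to all others. *)

Section AdditiveCategory.
Variable A : AddCat.

Lemma is_iso_id a : is_iso A (idm a).
Proof. exists (idm a); split; apply comp_id_l. Qed.

Lemma cokernel_unique_iso a b c c' (i : Hom A a b) (d : Hom A b c) (d' : Hom A b c') :
  is_cokernel A i d -> is_cokernel A i d' ->
  exists w : Hom A c c', is_iso A w /\ comp w d = d'.
Proof.
  intros [di H] [d'i H'].
  destruct (H _ d' d'i) as [w [wd _]].
  destruct (H' _ d di) as [w' [w'd' _]].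
  destruct (H _ d di) as [g [_ d_unique]].
  destruct (H' _ d' d'i) as [g' [_ d'_unique]].
  assert (w'w : comp w' w = idm c).
  { transitivity g; [|symmetry]; apply d_unique.
    - rewrite <- comp_assoc, wd, w'd'; reflexivity.
    - apply comp_id_l. }
  assert (ww' : comp w w' = idm c').
  { transitivity g'; [|symmetry]; apply d'_unique.
    - rewrite <- comp_assoc, w'd', wd; reflexivity.
    - apply comp_id_l. }
  exists w; split; [exists w'; split|]; assumption.
Qed.

Lemma kernel_unique_iso a a' b c (i : Hom A a b) (i' : Hom A a' b) (d : Hom A b c) :
  is_kernel A i d -> is_kernel A i' d ->
  exists u : Hom A a a', is_iso A u /\ comp i' u = i.
Proof.
  intros [di H] [di' H'].
  destruct (H' _ i di) as [u [i'u _]].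
  destruct (H _ i' di') as [u' [iu' _]].
  destruct (H _ i di) as [g [_ i_unique]].
  destruct (H' _ i' di') as [g' [_ i'_unique]].
  assert (u'u : comp u' u = idm a).
  { transitivity g; [|symmetry]; apply i_unique.
    - rewrite comp_assoc, iu', i'u; reflexivity.
    - apply comp_id_r. }
  assert (uu' : comp u u' = idm a').
  { transitivity g'; [|symmetry]; apply i'_unique.
    - rewrite comp_assoc, i'u, iu'; reflexivity.
    - apply comp_id_r. }
  exists u; split; [exists u'; split|]; assumption.
Qed.

Lemma pushout_unique_iso a b a' b1 b2 (i : Hom A a b) (f : Hom A a a')
  (i1 : Hom A a' b1) (f1 : Hom A b b1) (i2 : Hom A a' b2) (f2 : Hom A b b2) :
  is_pushout A i f i1 f1 -> is_pushout A i f i2 f2 ->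
  exists h : Hom A b2 b1, is_iso A h /\ comp h i2 = i1 /\ comp h f2 = f1.
Proof.
  intros [sq1 U1] [sq2 U2].
  destruct (U2 _ f1 i1 sq1) as [h [[hf2 hi2] _]].
  destruct (U1 _ f2 i2 sq2) as [k [[kf1 ki1] _]].
  destruct (U2 _ f2 i2 sq2) as [g [_ U2_unique]].
  destruct (U1 _ f1 i1 sq1) as [g' [_ U1_unique]].
  assert (kh : comp k h = idm b2).
  { transitivity g; [|symmetry]; apply U2_unique.
    - rewrite <- comp_assoc, hf2, kf1; reflexivity.
    - rewrite <- comp_assoc, hi2, ki1; reflexivity.
    - apply comp_id_l.
    - apply comp_id_l. }
  assert (hk : comp h k = idm b1).
  { transitivity g'; [|symmetry]; apply U1_unique.
    - rewrite <- comp_assoc, kf1, hf2; reflexivity.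
    - rewrite <- comp_assoc, ki1, hi2; reflexivity.
    - apply comp_id_l.
    - apply comp_id_l. }
  exists h; split; [exists k; split|split]; assumption.
Qed.

Lemma pullback_unique_iso b c c' b1 b2 (d : Hom A b c) (g : Hom A c' c)
  (d1 : Hom A b1 c') (g1 : Hom A b1 b) (d2 : Hom A b2 c') (g2 : Hom A b2 b) :
  is_pullback A d g d1 g1 -> is_pullback A d g d2 g2 ->
  exists h : Hom A b2 b1, is_iso A h /\ comp d1 h = d2 /\ comp g1 h = g2.
Proof.
  intros [sq1 U1] [sq2 U2].
  destruct (U1 _ g2 d2 sq2) as [h [[g1h d1h] _]].
  destruct (U2 _ g1 d1 sq1) as [k [[g2k d2k] _]].
  destruct (U2 _ g2 d2 sq2) as [x [_ U2_unique]].
  destruct (U1 _ g1 d1 sq1) as [x' [_ U1_unique]].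
  assert (kh : comp k h = idm b2).
  { transitivity x; [|symmetry]; apply U2_unique.
    - rewrite comp_assoc, g2k, g1h; reflexivity.
    - rewrite comp_assoc, d2k, d1h; reflexivity.
    - apply comp_id_r.
    - apply comp_id_r. }
  assert (hk : comp h k = idm b1).
  { transitivity x'; [|symmetry]; apply U1_unique.
    - rewrite comp_assoc, g1h, g2k; reflexivity.
    - rewrite comp_assoc, d1h, d2k; reflexivity.
    - apply comp_id_r.
    - apply comp_id_r. }
  exists h; split; [exists k; split|split]; assumption.
Qed.

Section ExactStructure.
Variable F : seq_class A.
Hypothesis hF : exact_structure F.

Lemma exact_replace_cokernel a b c c' (i : Hom A a b) (d : Hom A b c) (d' : Hom A b c') :
  F a b c i d -> is_cokernel A i d' -> F a b c' i d'.
Proof.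
  destruct hF as (kc & iso_closed & _). intros Fid d'_coker.
  destruct (kc _ _ _ _ _ Fid) as [_ d_coker].
  destruct (cokernel_unique_iso _ _ _ _ _ _ _ d_coker d'_coker) as [w [w_iso wd]].
  apply (iso_closed _ _ _ _ _ _ i d i d' (idm a) (idm b) w Fid
           (is_iso_id a) (is_iso_id b) w_iso).
  - rewrite comp_id_l, comp_id_r; reflexivity.
  - rewrite comp_id_r; symmetry; exact wd.
Qed.

Lemma exact_replace_kernel a a' b c (i : Hom A a b) (i' : Hom A a' b) (d : Hom A b c) :
  F a b c i d -> is_kernel A i' d -> F a' b c i' d.
Proof.
  destruct hF as (kc & iso_closed & _). intros Fid i'_ker.
  destruct (kc _ _ _ _ _ Fid) as [i_ker _].
  destruct (kernel_unique_iso _ _ _ _ _ _ _ i_ker i'_ker) as [u [u_iso i'u]].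
  apply (iso_closed _ _ _ _ _ _ i d i' d u (idm b) (idm c) Fid
           u_iso (is_iso_id b) (is_iso_id c)).
  - rewrite comp_id_l; exact i'u.
  - rewrite comp_id_l, comp_id_r; reflexivity.
Qed.

Lemma adm_mono_comp_iso a b b' (i : Hom A a b) (h : Hom A b b') :
  adm_mono A F i -> is_iso A h -> adm_mono A F (comp h i).
Proof.
  destruct hF as (_ & iso_closed & _).
  intros [c [d Fid]] h_iso. destruct h_iso as [k [kh hk]].
  exists c, (comp d k).
  apply (iso_closed _ _ _ _ _ _ i d _ _ (idm a) h (idm c) Fid
           (is_iso_id a) (ex_intro _ k (conj kh hk)) (is_iso_id c)).
  - apply comp_id_r.
  - rewrite <- comp_assoc, kh, comp_id_r, comp_id_l; reflexivity.
Qed.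

Lemma adm_epi_comp_iso b b' c (d : Hom A b c) (h : Hom A b' b) :
  adm_epi A F d -> is_iso A h -> adm_epi A F (comp d h).
Proof.
  destruct hF as (_ & iso_closed & _).
  intros [a [i Fid]] h_iso. destruct h_iso as [k [kh hk]].
  exists a, (comp k i).
  apply (iso_closed _ _ _ _ _ _ i d _ _ (idm a) k (idm c) Fid
           (is_iso_id a) (ex_intro _ h (conj hk kh)) (is_iso_id c)).
  - apply comp_id_r.
  - rewrite <- comp_assoc, hk, comp_id_r, comp_id_l; reflexivity.
Qed.

Lemma adm_mono_pushout a b a' b' (i : Hom A a b) (f : Hom A a a')
  (i' : Hom A a' b') (f' : Hom A b b') :
  is_pushout A i f i' f' -> adm_mono A F i -> adm_mono A F i'.
Proof.
  destruct hF as (_ & _ & _ & _ & _ & _ & pushouts & _). intros po i_adm.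
  destruct (pushouts _ _ _ i f i_adm) as [b'' [i'' [f'' [po'' i''_adm]]]].
  destruct (pushout_unique_iso _ _ _ _ _ _ _ _ _ _ _ po po'') as [h [h_iso [hi'' _]]].
  rewrite <- hi''. exact (adm_mono_comp_iso _ _ _ _ _ i''_adm h_iso).
Qed.

Lemma adm_epi_pullback b c c' b' (d : Hom A b c) (g : Hom A c' c)
  (d' : Hom A b' c') (g' : Hom A b' b) :
  is_pullback A d g d' g' -> adm_epi A F d -> adm_epi A F d'.
Proof.
  destruct hF as (_ & _ & _ & _ & _ & _ & _ & pullbacks). intros pb d_adm.
  destruct (pullbacks _ _ _ d g d_adm) as [b'' [d'' [g'' [pb'' d''_adm]]]].
  destruct (pullback_unique_iso _ _ _ _ _ _ _ _ _ _ _ pb'' pb) as [h [h_iso [d''h _]]].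
  rewrite <- d''h. exact (adm_epi_comp_iso _ _ _ _ _ d''_adm h_iso).
Qed.

End ExactStructure.

Definition inter_class (P : seq_class A -> Prop) : seq_class A :=
  fun a b c i d => forall F, P F -> F a b c i d.

Lemma adm_mono_inter_class (P : seq_class A -> Prop) F a b (i : Hom A a b) :
  adm_mono A (inter_class P) i -> P F -> adm_mono A F i.
Proof. intros [c [d H]] PF. exists c, d. exact (H F PF). Qed.

Lemma adm_epi_inter_class (P : seq_class A -> Prop) F b c (d : Hom A b c) :
  adm_epi A (inter_class P) d -> P F -> adm_epi A F d.
Proof. intros [a [i H]] PF. exists a, i. exact (H F PF). Qed.

Section Intersection.
Variables (P : seq_class A -> Prop) (E0 : seq_class A).
Hypothesis P_E0 : P E0.
Hypothesis P_exact : forall F, P F -> exact_structure F.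

Lemma inter_class_adm_mono a b (i : Hom A a b) :
  (forall F, P F -> adm_mono A F i) -> adm_mono A (inter_class P) i.
Proof.
  intros H. destruct (H E0 P_E0) as [c [d E0id]].
  destruct (P_exact E0 P_E0) as (kc & _).
  destruct (kc _ _ _ _ _ E0id) as [_ d_coker].
  exists c, d. intros F PF.
  destruct (H F PF) as [c' [d' Fid']].
  exact (exact_replace_cokernel F (P_exact F PF) _ _ _ _ _ _ _ Fid' d_coker).
Qed.

Lemma inter_class_adm_epi b c (d : Hom A b c) :
  (forall F, P F -> adm_epi A F d) -> adm_epi A (inter_class P) d.
Proof.
  intros H. destruct (H E0 P_E0) as [a [i E0id]].
  destruct (P_exact E0 P_E0) as (kc & _).
  destruct (kc _ _ _ _ _ E0id) as [i_ker _].
  exists a, i. intros F PF.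
  destruct (H F PF) as [a' [i' Fi'd]].
  exact (exact_replace_kernel F (P_exact F PF) _ _ _ _ _ _ _ Fi'd i_ker).
Qed.

Lemma exact_inter_class : exact_structure (inter_class P).
Proof.
  destruct (P_exact E0 P_E0) as (E0_kc & _ & _ & _ & _ & _ & E0_pushouts & E0_pullbacks).
  split; [|split; [|split; [|split; [|split; [|split; [|split]]]]]].
  - intros a b c i d H. exact (E0_kc _ _ _ _ _ (H E0 P_E0)).
  - intros a b c a' b' c' i d i' d' u v w H u_iso v_iso w_iso sq1 sq2 F PF.
    destruct (P_exact F PF) as (_ & iso_closed & _).
    exact (iso_closed _ _ _ _ _ _ _ _ _ _ _ _ _ (H F PF) u_iso v_iso w_iso sq1 sq2).
  - intros a. apply inter_class_adm_mono. intros F PF. apply (P_exact F PF).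
  - intros a. apply inter_class_adm_epi. intros F PF. apply (P_exact F PF).
  - intros a b c f g f_adm g_adm. apply inter_class_adm_mono. intros F PF.
    apply (P_exact F PF); eapply adm_mono_inter_class; eauto.
  - intros a b c f g f_adm g_adm. apply inter_class_adm_epi. intros F PF.
    apply (P_exact F PF); eapply adm_epi_inter_class; eauto.
  - intros a b a' i f i_adm.
    destruct (E0_pushouts _ _ _ i f (adm_mono_inter_class _ _ _ _ _ i_adm P_E0))
      as [b' [i' [f' [po _]]]].
    exists b', i', f'. split; [exact po|].
    apply inter_class_adm_mono. intros F PF.
    exact (adm_mono_pushout F (P_exact F PF) _ _ _ _ _ _ _ _ po
             (adm_mono_inter_class _ _ _ _ _ i_adm PF)).
  - intros b c c' d g d_adm.
    destruct (E0_pullbacks _ _ _ d g (adm_epi_inter_class _ _ _ _ _ d_adm P_E0))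
      as [b' [d' [g' [pb _]]]].
    exists b', d', g'. split; [exact pb|].
    apply inter_class_adm_epi. intros F PF.
    exact (adm_epi_pullback F (P_exact F PF) _ _ _ _ _ _ _ _ pb
             (adm_epi_inter_class _ _ _ _ _ d_adm PF)).
Qed.

End Intersection.

Lemma seq_class_ext (E1 E2 : seq_class A) :
  (forall a b c i d, E1 a b c i d <-> E2 a b c i d) -> E1 = E2.
Proof.
  intros H.
  do 5 (apply functional_extensionality_dep; intro).
  apply propositional_extensionality, H.
Qed.

Lemma ex_meet_inter_class (E E' : seq_class A) :
  ex_meet E E' = inter_class (fun F => F = E \/ F = E').
Proof.
  apply seq_class_ext. intros a b c i d; split.
  - intros [HE HE'] F [-> | ->]; assumption.
  - intros H; split; apply H; auto.
Qed.

Lemma ex_join_inter_class (E E' : seq_class A) :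
  ex_join E E' =
  inter_class (fun F => exact_structure F /\ subclass E F /\ subclass E' F).
Proof.
  apply seq_class_ext. intros a b c i d; split.
  - intros H F (F_exact & EF & E'F). exact (H F F_exact EF E'F).
  - intros H F F_exact EF E'F. exact (H F (conj F_exact (conj EF E'F))).
Qed.

End AdditiveCategory.

Theorem theorem5p3 (A : AddCat)
  (Emax_exists : exists Emax : seq_class A, exact_structure Emax /\
      forall E : seq_class A, exact_structure E -> subclass E Emax)
  (E E' : seq_class A) (hE : exact_structure E) (hE' : exact_structure E') :
  (exact_structure (ex_meet E E') /\
   subclass (ex_meet E E') E /\ subclass (ex_meet E E') E' /\
   (forall F : seq_class A, exact_structure F ->
      subclass F E -> subclass F E' -> subclass F (ex_meet E E'))) /\
  (exact_structure (ex_join E E') /\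
   subclass E (ex_join E E') /\ subclass E' (ex_join E E') /\
   (forall F : seq_class A, exact_structure F ->
      subclass E F -> subclass E' F -> subclass (ex_join E E') F)).
Proof.
  split; (split; [|split; [|split]]).
  - rewrite ex_meet_inter_class.
    apply (exact_inter_class A _ E); [left; reflexivity|].
    intros F [-> | ->]; assumption.
  - intros a b c i d [HE _]; exact HE.
  - intros a b c i d [_ HE']; exact HE'.
  - intros F _ FE FE' a b c i d H; split; auto.
  - rewrite ex_join_inter_class.
    destruct Emax_exists as [Emax [Emax_exact Emax_max]].
    apply (exact_inter_class A _ Emax); [auto|].
    intros F [F_exact _]; exact F_exact.
  - intros a b c i d H F _ EF _. exact (EF _ _ _ _ _ H).
  - intros a b c i d H F _ _ E'F. exact (E'F _ _ _ _ _ H).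
  - intros F F_exact EF E'F a b c i d H. exact (H F F_exact EF E'F).
Qed.
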